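(* Let $K$ be a Kleene algebra and $x,u,v\in K$. If the inequation $y\ge (x+uyv)^*$ has a least solution $N$ in $K$, then \[ (u+x+v)^*=(Nv)^*N(uN)^*. \]
   Context: A Kleene algebra is an idempotent semiring $(K,+,\cdot,0,1)$ with a unary operation $^*$ such that for all $a,b$: $aa^*+1\le a^*$, $a^*a+1\le a^*$, and for all $x$, $ax+b\le x$ implies $a^*b\le x$, and $xa+b\le x$ implies $ba^*\le x$; here $a\le b$ iff $a+b=b$. No $*$-continuity is assumed. *)

Set Implicit Arguments.

Record KleeneAlgebra := {
  ka_car :> Type;
  ka_add : ka_car -> ka_car -> ka_car;
  ka_mul : ka_car -> ka_car -> ka_car;
  ka_zero : ka_car;
  ka_one : ka_car;
  ka_star : ka_car -> ka_car;
  ka_addA : forall a b c, ka_add a (ka_add b c) = ka_add (ka_add a b) c;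
  ka_addC : forall a b, ka_add a b = ka_add b a;
  ka_add0 : forall a, ka_add a ka_zero = a;
  ka_addI : forall a, ka_add a a = a;
  ka_mulA : forall a b c, ka_mul a (ka_mul b c) = ka_mul (ka_mul a b) c;
  ka_mul1l : forall a, ka_mul ka_one a = a;
  ka_mul1r : forall a, ka_mul a ka_one = a;
  ka_mulDl : forall a b c, ka_mul (ka_add a b) c = ka_add (ka_mul a c) (ka_mul b c);
  ka_mulDr : forall a b c, ka_mul a (ka_add b c) = ka_add (ka_mul a b) (ka_mul a c);
  ka_mul0l : forall a, ka_mul ka_zero a = ka_zero;
  ka_mul0r : forall a, ka_mul a ka_zero = ka_zero;
  (* star axioms, with a <= b iff a + b = b *)
  ka_star_unfoldl : forall a,
    ka_add (ka_add (ka_mul a (ka_star a)) ka_one) (ka_star a) = ka_star a;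
  ka_star_unfoldr : forall a,
    ka_add (ka_add (ka_mul (ka_star a) a) ka_one) (ka_star a) = ka_star a;
  ka_star_indl : forall a b x,
    ka_add (ka_add (ka_mul a x) b) x = x ->
    ka_add (ka_mul (ka_star a) b) x = x;
  ka_star_indr : forall a b x,
    ka_add (ka_add (ka_mul x a) b) x = x ->
    ka_add (ka_mul b (ka_star a)) x = x
}.

Arguments ka_add {k}.
Arguments ka_mul {k}.
Arguments ka_star {k}.

Definition ka_le (K : KleeneAlgebra) (a b : K) : Prop := ka_add a b = b.
Arguments ka_le {K}.

Definition least_solution {K : KleeneAlgebra} (x u v N : K) : Prop :=
  ka_le (ka_star (ka_add x (ka_mul u (ka_mul N v)))) N /\
  forall y : K, ka_le (ka_star (ka_add x (ka_mul u (ka_mul y v)))) y -> ka_le N y.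

(* N is a fixed point, N = (x + uNv)^*, so it is reflexive, transitive and
   contains x and uNv.  Then R := (Nv)^* N (uN)^* contains 1 and is closed
   under left multiplication by x, v and u: for x and v this is the sliding
   inequality N (Nv)^* <= (Nv)^* N, for u it is u (Nv)^* <= u + N (Nv)^*,
   which holds because uNv <= N.  Star induction gives (u + x + v)^* <= R.
   Conversely (u + x + v)^* is itself a solution, so by leastness it is above
   N, hence above every factor of R. *)

From Stdlib Require Import Setoid.

Local Notation "a ⊕ b" := (ka_add a b) (at level 50, left associativity).
Local Notation "a ⊗ b" := (ka_mul a b) (at level 40, left associativity).
Local Notation "a ≦ b" := (ka_le a b) (at level 70).
Local Notation "1" := (ka_one _).

Section KleeneAlgebraTheory.
Context {K : KleeneAlgebra}.
Implicit Types a b c d s : K.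

Lemma le_refl a : a ≦ a.
Proof. apply ka_addI. Qed.

Lemma le_trans a b c : a ≦ b -> b ≦ c -> a ≦ c.
Proof. unfold ka_le; intros Hab Hbc. rewrite <- Hbc, ka_addA, Hab. reflexivity. Qed.

Lemma le_antisym a b : a ≦ b -> b ≦ a -> a = b.
Proof. unfold ka_le; intros Hab Hba. rewrite <- Hab, <- Hba at 1. apply ka_addC. Qed.

Lemma le_addl a b : a ≦ a ⊕ b.
Proof. unfold ka_le. rewrite ka_addA, ka_addI. reflexivity. Qed.

Lemma le_addr a b : b ≦ a ⊕ b.
Proof. rewrite ka_addC. apply le_addl. Qed.

Lemma add_le_iff a b c : a ⊕ b ≦ c <-> a ≦ c /\ b ≦ c.
Proof.
  split.
  - intros H. split; [eapply le_trans; [apply le_addl | exact H]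
                    | eapply le_trans; [apply le_addr | exact H]].
  - unfold ka_le; intros [Hac Hbc]. rewrite <- ka_addA, Hbc, Hac. reflexivity.
Qed.

Lemma add_lub a b c : a ≦ c -> b ≦ c -> a ⊕ b ≦ c.
Proof. intros; apply add_le_iff; auto. Qed.

Lemma add_mono a b c d : a ≦ b -> c ≦ d -> a ⊕ c ≦ b ⊕ d.
Proof. intros. apply add_lub; eapply le_trans; eauto using le_addl, le_addr. Qed.

Lemma mul_monol a b c : a ≦ b -> c ⊗ a ≦ c ⊗ b.
Proof. unfold ka_le; intros H. rewrite <- ka_mulDr, H. reflexivity. Qed.

Lemma mul_monor a b c : a ≦ b -> a ⊗ c ≦ b ⊗ c.
Proof. unfold ka_le; intros H. rewrite <- ka_mulDl, H. reflexivity. Qed.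

Lemma mul_mono a b c d : a ≦ b -> c ≦ d -> a ⊗ c ≦ b ⊗ d.
Proof. intros; eapply le_trans; [apply mul_monor | apply mul_monol]; eauto. Qed.

Lemma le_mulr a c : 1 ≦ c -> a ≦ a ⊗ c.
Proof. intros H. rewrite <- (ka_mul1r _ a) at 1. apply mul_monol, H. Qed.

Lemma le_mull a c : 1 ≦ c -> a ≦ c ⊗ a.
Proof. intros H. rewrite <- (ka_mul1l _ a) at 1. apply mul_monor, H. Qed.

Lemma mul_star_le a : a ⊗ ka_star a ≦ ka_star a.
Proof. eapply le_trans; [apply le_addl | exact (ka_star_unfoldl _ a)]. Qed.

Lemma star_mul_le a : ka_star a ⊗ a ≦ ka_star a.
Proof. eapply le_trans; [apply le_addl | exact (ka_star_unfoldr _ a)]. Qed.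

Lemma one_le_star a : 1 ≦ ka_star a.
Proof. eapply le_trans; [apply le_addr | exact (ka_star_unfoldl _ a)]. Qed.

Lemma le_star a : a ≦ ka_star a.
Proof. eapply le_trans; [apply le_mulr, one_le_star | apply mul_star_le]. Qed.

Lemma star_le a s : a ≦ s -> 1 ≦ s -> s ⊗ s ≦ s -> ka_star a ≦ s.
Proof.
  intros Has H1s Hss. rewrite <- (ka_mul1r _ (ka_star a)). apply ka_star_indl.
  apply add_lub; [eapply le_trans; [apply mul_monor, Has | exact Hss] | exact H1s].
Qed.

Lemma star_mul_star_le a : ka_star a ⊗ ka_star a ≦ ka_star a.
Proof. apply ka_star_indl, add_lub; [apply mul_star_le | apply le_refl]. Qed.

Lemma mul_le_star a b c : a ≦ ka_star c -> b ≦ ka_star c -> a ⊗ b ≦ ka_star c.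
Proof. intros. eapply le_trans; [apply mul_mono; eauto | apply star_mul_star_le]. Qed.

Lemma star_le_star a c : a ≦ ka_star c -> ka_star a ≦ ka_star c.
Proof. intros H. apply star_le; [exact H | apply one_le_star | apply star_mul_star_le]. Qed.

Lemma star_mono a b : a ≦ b -> ka_star a ≦ ka_star b.
Proof. intros H. apply star_le_star. eapply le_trans; [exact H | apply le_star]. Qed.

Lemma summands_le_star a b c :
  a ≦ ka_star (a ⊕ b ⊕ c) /\ b ≦ ka_star (a ⊕ b ⊕ c) /\ c ≦ ka_star (a ⊕ b ⊕ c).
Proof.
  pose proof (le_star (a ⊕ b ⊕ c)) as Hsum.
  apply add_le_iff in Hsum as [Hab Hc]. apply add_le_iff in Hab as [Ha Hb]. auto.
Qed.

Lemma mul_star_slide_le a b :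
  1 ≦ a -> a ⊗ a ≦ a -> a ⊗ ka_star (a ⊗ b) ≦ ka_star (a ⊗ b) ⊗ a.
Proof.
  intros H1a Haa. apply ka_star_indr, add_lub; [| apply le_mull, one_le_star].
  rewrite <- !ka_mulA, (ka_mulA _ a a b).
  eapply le_trans; [apply mul_monol, mul_monor, Haa |].
  eapply le_trans; [apply star_mul_le | apply le_mulr, H1a].
Qed.

Lemma mul_star_absorb_le a b c :
  c ⊗ (a ⊗ b) ≦ a -> c ⊗ ka_star (a ⊗ b) ≦ c ⊕ a ⊗ ka_star (a ⊗ b).
Proof.
  intros Hcab. apply ka_star_indr, add_lub; [| apply le_addl].
  eapply le_trans; [| apply le_addr]. rewrite ka_mulDl. apply add_lub.
  - eapply le_trans; [exact Hcab | apply le_mulr, one_le_star].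
  - rewrite <- ka_mulA. apply mul_monol, star_mul_le.
Qed.

End KleeneAlgebraTheory.

Section LeastSolution.
Context {K : KleeneAlgebra}.
Variables x u v N : K.
Hypothesis N_least : least_solution x u v N.

Lemma least_solution_fixpoint : N = ka_star (x ⊕ u ⊗ (N ⊗ v)).
Proof.
  destruct N_least as [N_sol N_min]. apply le_antisym; [| exact N_sol].
  apply N_min, star_mono, add_mono; [apply le_refl |].
  apply mul_monol, mul_monor, N_sol.
Qed.

Lemma least_solution_le_star_sum : N ≦ ka_star (u ⊕ x ⊕ v).
Proof.
  destruct (summands_le_star u x v) as (Hu & Hx & Hv).
  apply N_least, star_le_star, add_lub; [exact Hx |].
  repeat apply mul_le_star; auto using le_refl.
Qed.

End LeastSolution.

Section FixpointFactorisation.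
Context {K : KleeneAlgebra}.
Variables x u v N : K.
Hypothesis N_fix : N = ka_star (x ⊕ u ⊗ (N ⊗ v)).

Local Notation R := (ka_star (N ⊗ v) ⊗ (N ⊗ ka_star (u ⊗ N))).

Lemma fixpoint_one_le : 1 ≦ N.
Proof. rewrite N_fix. apply one_le_star. Qed.

Lemma fixpoint_mul_le : N ⊗ N ≦ N.
Proof. pose proof (star_mul_star_le (x ⊕ u ⊗ (N ⊗ v))) as H. rewrite <- N_fix in H. exact H. Qed.

Lemma fixpoint_ge : x ⊕ u ⊗ (N ⊗ v) ≦ N.
Proof. pose proof (le_star (x ⊕ u ⊗ (N ⊗ v))) as H. rewrite <- N_fix in H. exact H. Qed.

Lemma one_le_factorisation : 1 ≦ R.
Proof.
  eapply le_trans; [apply one_le_star | apply le_mulr].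
  eapply le_trans; [apply fixpoint_one_le | apply le_mulr, one_le_star].
Qed.

Lemma fixpoint_mul_factorisation_le : N ⊗ R ≦ R.
Proof.
  rewrite ka_mulA.
  eapply le_trans; [apply mul_monor, mul_star_slide_le;
                    [apply fixpoint_one_le | apply fixpoint_mul_le] |].
  rewrite <- ka_mulA. apply mul_monol. rewrite ka_mulA. apply mul_monor, fixpoint_mul_le.
Qed.

Lemma star_sum_le_factorisation : ka_star (u ⊕ x ⊕ v) ≦ R.
Proof.
  destruct (proj1 (add_le_iff _ _ _) fixpoint_ge) as [Hx Huv].
  rewrite <- (ka_mul1r _ (ka_star _)). apply ka_star_indl.
  rewrite !ka_mulDl. repeat apply add_lub.
  - rewrite ka_mulA.
    eapply le_trans; [apply mul_monor, mul_star_absorb_le, Huv |].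
    rewrite ka_mulDl. apply add_lub.
    + rewrite ka_mulA. eapply le_trans; [apply mul_star_le |].
      eapply le_trans; [apply le_mull, fixpoint_one_le | apply le_mull, one_le_star].
    + rewrite <- ka_mulA. apply fixpoint_mul_factorisation_le.
  - eapply le_trans; [apply mul_monor, Hx | apply fixpoint_mul_factorisation_le].
  - rewrite ka_mulA. apply mul_monor.
    eapply le_trans; [apply mul_monor, le_mull, fixpoint_one_le | apply mul_star_le].
  - apply one_le_factorisation.
Qed.

End FixpointFactorisation.

Lemma factorisation_le_star_sum {K : KleeneAlgebra} (x u v N : K) :
  N ≦ ka_star (u ⊕ x ⊕ v) ->
  ka_star (N ⊗ v) ⊗ (N ⊗ ka_star (u ⊗ N)) ≦ ka_star (u ⊕ x ⊕ v).
Proof.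
  intros HN.
  destruct (summands_le_star u x v) as (Hu & _ & Hv).
  repeat apply mul_le_star; auto; apply star_le_star, mul_le_star; auto.
Qed.

Theorem theorem6 (K : KleeneAlgebra) (x u v N : K) :
  least_solution x u v N ->
  ka_star (ka_add (ka_add u x) v) =
  ka_mul (ka_star (ka_mul N v)) (ka_mul N (ka_star (ka_mul u N))).
Proof.
  intros N_least. apply le_antisym.
  - apply star_sum_le_factorisation, least_solution_fixpoint, N_least.
  - apply factorisation_le_star_sum, least_solution_le_star_sum, N_least.
Qed.
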